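(* Let $\Sigma^*\to G$, $w\mapsto\overline w$, be a choice of generators for a group $G$, let $\#\notin\Sigma$, let $R\subset\Sigma^*$ be a regular combing, and suppose $M=\{u\#v\#w\mid u,v,w\in R,\ \overline u\,\overline v\,\overline w=1\}$ is context-free. Let $\mathcal G$ be a context-free grammar for $M$ in Chomsky normal form (all productions of the form $A\to BC$ or $A\to a$ with $A,B,C$ nonterminals and $a\in\Sigma\cup\{\#\}$) such that every production participates in some derivation of a word of $M$ and every nonterminal occurs in some production. Call a nonterminal $A$ of rank zero if no terminal word derivable from $A$ contains $\#$. Then there exist a constant $K'$ and a regular combing $R'\subset R$ such that every word of $M\cap (R'\#R'\#R')$ has a derivation in $\mathcal G$ in which each nonterminal of rank zero derives a subword of length at most $K'$.
   Context: A choice of generators for $G$ consists of a finite alphabet $\Sigma$ with formal inverses (a fixed-point-free involution $a\mapsto a^{-1}$ on $\Sigma$, extended by $(wv)^{-1}=v^{-1}w^{-1}$) and a surjective monoid homomorphism $\Sigma^*\to G$, $w\mapsto\overline w$, with $\overline{w^{-1}}=\overline w^{-1}$. A regular combing is a regular language $R\subset\Sigma^*$ mapping onto $G$. In a derivation of a terminal word, each occurrence of a nonterminal derives a subword of that word. *)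

From mathcomp Require Import all_boot.
Set Implicit Arguments.
Unset Strict Implicit.
Unset Printing Implicit Defensive.

Record group_str (G : Type) := GroupStr {
  gmul : G -> G -> G;
  gone : G;
  ginv : G -> G;
  gmulA : forall x y z, gmul x (gmul y z) = gmul (gmul x y) z;
  gmul1l : forall x, gmul gone x = x;
  gmul1r : forall x, gmul x gone = x;
  gmulVl : forall x, gmul (ginv x) x = gone;
  gmulVr : forall x, gmul x (ginv x) = gone
}.

Definition word_inv (S : Type) (sinv : S -> S) (w : seq S) : seq S :=
  rev (map sinv w).

Definition choice_of_generators (G : Type) (gs : group_str G) (Sigma : finType)
  (sinv : Sigma -> Sigma) (phi : seq Sigma -> G) : Prop :=
  [/\ involutive sinv /\ (forall a, sinv a <> a),
      phi [::] = gone gs,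
      (forall w v, phi (w ++ v) = gmul gs (phi w) (phi v)),
      (forall g, exists w, phi w = g) &
      (forall w, phi (word_inv sinv w) = ginv gs (phi w))].

Record dfa (A : finType) := DFA {
  dstate : finType;
  dstart : dstate;
  dfinal : pred dstate;
  dtrans : dstate -> A -> dstate
}.

Arguments dfinal {A} d _.
Arguments dstart {A} d.
Arguments dtrans {A} d _ _.

Definition dfa_accepts (A : finType) (D : dfa A) (w : seq A) : bool :=
  dfinal D (foldl (dtrans D) (dstart D) w).

Definition regular (A : finType) (L : seq A -> Prop) : Prop :=
  exists D : dfa A, forall w, L w <-> dfa_accepts D w.

Definition regular_combing (G : Type) (Sigma : finType) (phi : seq Sigma -> G)
  (R : seq Sigma -> Prop) : Prop :=
  regular R /\ forall g, exists w, R w /\ phi w = g.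

(* Words over Sigma u {#}: [None] plays the role of the letter #. *)
Definition sharp3 (Sigma : Type) (u v w : seq Sigma) : seq (option Sigma) :=
  map Some u ++ None :: map Some v ++ None :: map Some w.

Definition Mlang (G : Type) (gs : group_str G) (Sigma : Type)
  (phi : seq Sigma -> G) (R : seq Sigma -> Prop) (x : seq (option Sigma)) : Prop :=
  exists u v w, [/\ x = sharp3 u v w, R u, R v, R w &
                   gmul gs (gmul gs (phi u) (phi v)) (phi w) = gone gs].

Definition concat3 (Sigma : Type) (R : seq Sigma -> Prop) (x : seq (option Sigma)) : Prop :=
  exists u v w, [/\ x = sharp3 u v w, R u, R v & R w].

Record cnf_grammar (T : Type) := CNFGrammar {
  nonterm : finType;
  gstart : nonterm;
  binrule : nonterm -> nonterm -> nonterm -> bool;   (* A -> B C *)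
  termrule : nonterm -> T -> bool                     (* A -> a *)
}.

Arguments binrule {T} c _ _ _.
Arguments termrule {T} c _ _.
Arguments gstart {T} c.

Inductive ptree (N T : Type) : Type :=
  | PLeaf (A : N) (a : T)
  | PNode (A : N) (l r : ptree N T).
Arguments PLeaf {N T}.
Arguments PNode {N T}.

Definition proot (N T : Type) (t : ptree N T) : N :=
  match t with PLeaf A _ => A | PNode A _ _ => A end.

Fixpoint pyield (N T : Type) (t : ptree N T) : seq T :=
  match t with PLeaf _ a => [:: a] | PNode _ l r => pyield l ++ pyield r end.

Fixpoint pvalid {T : Type} (g : cnf_grammar T) (t : ptree (nonterm g) T) : bool :=
  match t with
  | PLeaf A a => termrule g A a
  | PNode A l r => [&& binrule g A (proot l) (proot r), @pvalid T g l & @pvalid T g r]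
  end.

Arguments pvalid {T} g t.

Definition derives {T : Type} (g : cnf_grammar T) (A : nonterm g)
  (t : ptree (nonterm g) T) (x : seq T) : Prop :=
  [/\ pvalid g t, proot t = A & pyield t = x].

Arguments derives {T} g A t x.

Fixpoint all_nodes (N T : Type) (P : ptree N T -> Prop) (t : ptree N T) : Prop :=
  P t /\ match t with PLeaf _ _ => True | PNode _ l r => all_nodes P l /\ all_nodes P r end.

Fixpoint some_node (N T : Type) (P : ptree N T -> Prop) (t : ptree N T) : Prop :=
  P t \/ match t with PLeaf _ _ => False | PNode _ l r => some_node P l \/ some_node P r end.

Inductive production (N T : Type) :=
  | BinProd (A B C : N)
  | TermProd (A : N) (a : T).
Arguments BinProd {N T}.
Arguments TermProd {N T}.

Definition root_prod (N T : Type) (t : ptree N T) : production N T :=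
  match t with
  | PLeaf A a => TermProd A a
  | PNode A l r => BinProd A (proot l) (proot r)
  end.

Definition is_production {T : Type} (g : cnf_grammar T) (p : production (nonterm g) T) : bool :=
  match p with BinProd A B C => binrule g A B C | TermProd A a => termrule g A a end.

Arguments is_production {T} g p.

Definition generates (T : Type) (g : cnf_grammar T) (L : seq T -> Prop) : Prop :=
  forall x, L x <-> exists t, derives g (gstart g) t x.

Definition productions_useful (T : Type) (g : cnf_grammar T) (L : seq T -> Prop) : Prop :=
  forall p, is_production g p ->
    exists t x, [/\ derives g (gstart g) t x, L x & some_node (fun s => root_prod s = p) t].

Definition nonterminals_occur (T : Type) (g : cnf_grammar T) : Prop :=
  forall X : nonterm g,
    (exists A B C, binrule g A B C /\ (X = A \/ X = B \/ X = C)) \/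
    (exists a, termrule g X a).

Definition rank_zero (Sigma : eqType) (g : cnf_grammar (option Sigma)) (A : nonterm g) : Prop :=
  forall t x, derives g A t x -> None \notin x.

From mathcomp Require Import all_boot zify boolp.
Set Implicit Arguments.
Unset Strict Implicit.
Unset Printing Implicit Defensive.

(* Fix a DFA D for R and label every node of a parse tree by its nonterminal
   together with the action of its yield on the states of D.  If a rank-zero
   subtree has a yield longer than 2^k, k the number of labels, some node in it
   carries the label of one of its proper descendants while its children have
   no such repetition.  Its yield y (of length at most 2^(k+1), without #) may
   be replaced by the shorter yield y' of that descendant: y and y' act alike on
   D, and they have the same image in G, since grafting either derivation into
   a derivation of a word of M through the same nonterminal gives two words of
   M that differ only in y versus y'.  Hence the words of R without such a
   "shortenable" factor form a regular language (the factors have bounded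
   length) that still maps onto G (shorten repeatedly), and for words of
   R'#R'#R' every rank-zero node of every derivation has yield at most 2^k. *)

Section Subtrees.

Variables N T : Type.
Implicit Types s t : ptree N T.

Fixpoint subtree s t : Prop :=
  s = t \/ if t is PNode _ l r then subtree s l \/ subtree s r else False.

Definition proper_subtree s t : Prop :=
  if t is PNode _ l r then subtree s l \/ subtree s r else False.

Lemma subtree_refl t : subtree t t.
Proof. by case: t => *; left. Qed.

Lemma proper_subtreeW s t : proper_subtree s t -> subtree s t.
Proof. by case: t => //= *; right. Qed.

Lemma subtree_trans s t u : subtree s t -> subtree t u -> subtree s u.
Proof.
move=> st; elim: u => [A a|A l IHl r IHr]; first by case=> [<-|[]].
by case=> [<-|[/IHl|/IHr]] // ?; right; [left|right].
Qed.

Lemma subtree_yield s t : subtree s t ->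
  exists pre suf, pyield t = pre ++ pyield s ++ suf.
Proof.
elim: t => [A a|A l IHl r IHr] /=.
  by case=> // ->; exists [::], [::]; rewrite cats0.
case=> [->|[/IHl|/IHr] [pre [suf ->]]]; first by exists [::], [::]; rewrite cats0.
  by exists pre, (suf ++ pyield r); rewrite !catA.
by exists (pyield l ++ pre), suf; rewrite !catA.
Qed.

Lemma size_pyield_gt0 t : 0 < size (pyield t).
Proof. by elim: t => //= A l IHl r IHr; rewrite size_cat addn_gt0 IHl. Qed.

Lemma proper_subtree_size s t :
  proper_subtree s t -> size (pyield s) < size (pyield t).
Proof.
case: t => //= A l r [] /subtree_yield [pre [suf ->]]; rewrite !size_cat.
  by have := size_pyield_gt0 r; lia.
by have := size_pyield_gt0 l; lia.
Qed.

Lemma some_node_subtree (P : ptree N T -> Prop) t :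
  some_node P t -> exists2 s, subtree s t & P s.
Proof.
elim: t => [A a|A l IHl r IHr] /=; first by case=> // ?; exists (PLeaf A a); first left.
case=> [?|[/IHl|/IHr] [s ? ?]]; first by exists (PNode A l r); first left.
  by exists s => //; right; left.
by exists s => //; right; right.
Qed.

Lemma all_nodes_subtree (P : ptree N T -> Prop) t :
  (forall s, subtree s t -> P s) -> all_nodes P t.
Proof.
elim: t => [A a|A l IHl r IHr] Psub; split=> //; do ?exact: Psub (subtree_refl _).
by split; [apply: IHl | apply: IHr] => s ?; apply: Psub; right; [left|right].
Qed.

End Subtrees.

Section Derivations.

Variables (T : Type) (g : cnf_grammar T).
Implicit Types s t : ptree (nonterm g) T.

Lemma subtree_pvalid s t : subtree s t -> pvalid g t -> pvalid g s.
Proof.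
elim: t => [A a|A l IHl r IHr] /=; first by case=> // ->.
by case=> [->|[/IHl|/IHr]] //= IH /and3P[]; auto.
Qed.

Lemma subtree_context s t : subtree s t -> pvalid g t ->
  exists pre suf, pyield t = pre ++ pyield s ++ suf /\
    forall s', pvalid g s' -> proot s' = proot s ->
      exists t', [/\ pvalid g t', proot t' = proot t & pyield t' = pre ++ pyield s' ++ suf].
Proof.
have here t' : exists pre suf, pyield t' = pre ++ pyield t' ++ suf /\
    forall s', pvalid g s' -> proot s' = proot t' ->
      exists t'', [/\ pvalid g t'', proot t'' = proot t' & pyield t'' = pre ++ pyield s' ++ suf].
  by exists [::], [::]; split=> [|s' ? ?]; [|exists s']; rewrite cats0.
elim: t => [A a|A l IHl r IHr]; first by case=> [->|[]] _; apply: here.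
case=> [->|[sl|sr]] /and3P[rule vl vr]; first exact: here.
- have [pre [suf [yl fill]]] := IHl sl vl.
  exists pre, (suf ++ pyield r); split=> [|s' vs' rs']; first by rewrite /= yl !catA.
  have [l' [vl' rl' yl']] := fill s' vs' rs'.
  exists (PNode A l' r); split=> //=; first by rewrite rl'; apply/and3P.
  by rewrite yl' !catA.
- have [pre [suf [yr fill]]] := IHr sr vr.
  exists (pyield l ++ pre), suf; split=> [|s' vs' rs']; first by rewrite /= yr !catA.
  have [r' [vr' rr' yr']] := fill s' vs' rs'.
  exists (PNode A l r'); split=> //=; first by rewrite rr'; apply/and3P.
  by rewrite yr' !catA.
Qed.

Lemma nonterminal_occurs (L : seq T -> Prop) :
  productions_useful g L -> nonterminals_occur g -> forall X : nonterm g,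
  exists t x, derives g (gstart g) t x /\ exists2 s, subtree s t & proot s = X.
Proof.
move=> useful occur X; case: (occur X) => [[A [B [C [rule HX]]]] | [a rule]].
  have [t [x [Dt _ /some_node_subtree [[//|A' l r] st [eA eB eC]]]]] :=
    useful (BinProd A B C) rule.
  exists t, x; split=> //.
  case: HX => [->|[->|->]]; first by exists (PNode A' l r).
    by exists l => //; apply: subtree_trans st; right; left; apply: subtree_refl.
  by exists r => //; apply: subtree_trans st; right; right; apply: subtree_refl.
have [t [x [Dt _ /some_node_subtree [[A' a'|//] st [eX _]]]]] := useful (TermProd X a) rule.
by exists t, x; split=> //; exists (PLeaf A' a').
Qed.

End Derivations.

Section RepeatedLabels.

Variables (N T : Type) (L : finType) (lab : ptree N T -> L).
Implicit Types s t : ptree N T.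

Definition repeats t := exists2 s, proper_subtree s t & lab s = lab t.

Definition has_repeat t := exists2 s, subtree s t & repeats s.

Lemma size_pyield_avoiding (anc : seq L) t : uniq anc ->
  (forall s, subtree s t -> lab s \notin anc) -> ~ has_repeat t ->
  size (pyield t) <= 2 ^ (#|L| - size anc).
Proof.
elim: t anc => [A a|A l IHl r IHr] anc uniq_anc fresh no_rep /=; first by rewrite expn_gt0.
set t := PNode A l r; set anc' := lab t :: anc.
have uniq_anc' : uniq anc' by rewrite /= fresh //; apply: subtree_refl.
have size_anc' : size anc' <= #|L| by rewrite -(card_uniqP uniq_anc') max_card.
have child c : (forall s, subtree s c -> proper_subtree s t) ->
    (forall s, subtree s c -> lab s \notin anc') /\ ~ has_repeat c.
  move=> below; split=> [s /below s_t | [s /below s_t rep_s]].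
    rewrite inE negb_or fresh ?andbT; last exact: proper_subtreeW.
    by apply/eqP => same; apply: no_rep; exists t; [apply: subtree_refl | exists s].
  by apply: no_rep; exists s => //; apply: proper_subtreeW.
have [fresh_l no_rep_l] := child l (fun s sl => or_introl sl).
have [fresh_r no_rep_r] := child r (fun s sr => or_intror sr).
rewrite size_cat -(subnSK size_anc') expnS mul2n -addnn.
exact: leq_add (IHl _ uniq_anc' fresh_l no_rep_l) (IHr _ uniq_anc' fresh_r no_rep_r).
Qed.

Lemma size_pyield_no_repeat t : ~ has_repeat t -> size (pyield t) <= 2 ^ #|L|.
Proof. by move/(@size_pyield_avoiding [::]); rewrite subn0; apply. Qed.

Lemma minimal_repeat t : has_repeat t -> exists A l r,
  [/\ subtree (PNode A l r) t, repeats (PNode A l r), ~ has_repeat l & ~ has_repeat r].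
Proof.
elim: t => [A a|A l IHl r IHr]; first by case=> s [->|[]] [].
move=> rep_t; have [/IHl [A' [l' [r' [st]]]] | no_rep_l] := pselect (has_repeat l).
  by exists A', l', r'; split=> //; apply: subtree_trans st _; right; left; apply: subtree_refl.
have [/IHr [A' [l' [r' [st]]]] | no_rep_r] := pselect (has_repeat r).
  by exists A', l', r'; split=> //; apply: subtree_trans st _; right; right; apply: subtree_refl.
case: rep_t => s [->|[sl|sr]] rep_s; first by exists A, l, r; split=> //; apply: subtree_refl.
  by case: no_rep_l; exists s.
by case: no_rep_r; exists s.
Qed.

End RepeatedLabels.

Section SharpWords.

Variable S : Type.
Implicit Types (u v w y : seq S) (pre suf r : seq (option S)).

Lemma map_Some_prefix y u suf r : map Some y ++ suf = map Some u ++ None :: r ->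
  exists q, u = y ++ q /\ suf = map Some q ++ None :: r.
Proof.
elim: y u => [|b y IH] [|a u] //=; try by move=> ->; eexists.
by case=> -> /IH [q [-> ->]]; exists q.
Qed.

Lemma factor_Some_None pre y suf u r :
  pre ++ map Some y ++ suf = map Some u ++ None :: r ->
  (exists p q, [/\ u = p ++ y ++ q, pre = map Some p & suf = map Some q ++ None :: r]) \/
  (exists pre', pre = map Some u ++ None :: pre' /\ pre' ++ map Some y ++ suf = r).
Proof.
elim: u pre => [|a u IH] [|o pre] /=.
- by case/(map_Some_prefix (u := [::])) => q [-> ->]; left; exists [::], q.
- by case=> -> <-; right; exists pre.
- by case/(map_Some_prefix (u := a :: u)) => q [-> ->]; left; exists [::], q.
case=> -> /IH [[p [q [-> -> ->]]] | [pre' [-> <-]]]; first by left; exists (a :: p), q.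
by right; exists pre'.
Qed.

Lemma factor_map_Some pre y suf w : pre ++ map Some y ++ suf = map Some w ->
  exists p q, [/\ w = p ++ y ++ q, pre = map Some p & suf = map Some q].
Proof.
move=> E; have : pre ++ map Some y ++ (suf ++ [:: None]) = map Some w ++ [:: None].
  by rewrite !catA -E !catA.
case/factor_Some_None => [[p [q [-> -> Es]]] | [pre' [_ /(congr1 size)]]].
  by move: Es; rewrite !cats1 => /rcons_inj [->]; exists p, q.
by rewrite !size_cat /=; lia.
Qed.

Lemma map_Some_None_inj u u' r r' :
  map Some u ++ None :: r = map Some u' ++ None :: r' -> u = u' /\ r = r'.
Proof.
elim: u u' => [|a u IH] [|a' u'] //=; first by case.
by case=> -> /IH [-> ->].
Qed.

Lemma sharp3_inj u v w u' v' w' :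
  sharp3 u v w = sharp3 u' v' w' -> [/\ u = u', v = v' & w = w'].
Proof.
by case/map_Some_None_inj => -> /map_Some_None_inj [-> /(inj_map (@Some_inj _)) ->].
Qed.

Lemma sharp3_factor pre y suf u v w : pre ++ map Some y ++ suf = sharp3 u v w ->
  exists p q, [\/ u = p ++ y ++ q /\
                   (forall y', pre ++ map Some y' ++ suf = sharp3 (p ++ y' ++ q) v w),
                 v = p ++ y ++ q /\
                   (forall y', pre ++ map Some y' ++ suf = sharp3 u (p ++ y' ++ q) w) |
                 w = p ++ y ++ q /\
                   (forall y', pre ++ map Some y' ++ suf = sharp3 u v (p ++ y' ++ q))].
Proof.
rewrite /sharp3 => /factor_Some_None [[p [q [-> -> ->]]] | [pre' [-> E]]].
  by exists p, q; constructor 1; split=> // y'; rewrite !map_cat -!catA.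
move: E => /factor_Some_None [[p [q [-> -> ->]]] | [pre'' [-> E]]].
  by exists p, q; constructor 2; split=> // y'; rewrite !map_cat -!catA.
move: E => /factor_map_Some [p [q [-> -> ->]]].
by exists p, q; constructor 3; split=> // y'; rewrite !map_cat -!catA /= -?catA /= -?catA.
Qed.

End SharpWords.

Lemma notin_None_map_Some (S : eqType) (x : seq (option S)) :
  None \notin x -> exists y, x = map Some y.
Proof.
move=> x_Some; exists (pmap id x).
rewrite pmapS_filter map_id; apply/esym/all_filterP/allP => -[//|].
by move=> x_None; rewrite x_None in x_Some.
Qed.

Section GroupCancel.

Variables (G : Type) (gs : group_str G).

Lemma gmulI x : injective (gmul gs x).
Proof.
move=> y z /(congr1 (gmul gs (ginv gs x))).
by rewrite !gmulA gmulVl !gmul1l.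
Qed.

Lemma gmulIr x : injective (gmul gs ^~ x).
Proof.
move=> y z /(congr1 (gmul gs ^~ (ginv gs x))).
by rewrite -!gmulA gmulVr !gmul1r.
Qed.

End GroupCancel.

Arguments gmulI {G gs} x.
Arguments gmulIr {G gs} x.

Definition has_factor (A : eqType) (Y : seq A -> Prop) (w : seq A) : Prop :=
  exists2 y, infix y w & Y y.

Lemma has_factor_rcons (A : eqType) (Y : seq A -> Prop) w a :
  has_factor Y (rcons w a) <-> has_factor Y w \/ exists2 y, suffix y (rcons w a) & Y y.
Proof.
split=> [[y] | [[y yw] | [y yw]] Yy]; last 2 first.
- by exists y; rewrite // infix_rconsl yw orbT.
- by exists y; rewrite // infix_rconsl yw.
by rewrite infix_rconsl => /orP[yw|yw] Yy; [right|left]; exists y.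
Qed.

Definition lastn (A : Type) n (w : seq A) : seq A := drop (size w - n) w.

Lemma size_lastn (A : Type) n (w : seq A) : size (lastn n w) = minn n (size w).
Proof. rewrite size_drop; lia. Qed.

Lemma suffix_lastn (A : eqType) n (y w : seq A) :
  size y <= n -> suffix y (lastn n w) = suffix y w.
Proof. by move=> yn; rewrite !suffixE size_lastn drop_drop; congr (drop _ _ == _); lia. Qed.

Lemma lastn_rcons (A : Type) n (w : seq A) a :
  lastn n (rcons (lastn n w) a) = lastn n (rcons w a).
Proof.
by rewrite /lastn -drop_rcons ?leq_subr // drop_drop size_drop !size_rcons; congr drop; lia.
Qed.

Section AvoidFactors.

Variables (A : finType) (Y : seq A -> Prop) (n : nat) (D : dfa A).
Hypothesis size_Y : forall y, Y y -> size y <= n.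

Definition avoid_state (w : seq A) : dstate D * bool * n.-bseq A :=
  (foldl (dtrans D) (dstart D) w, `[< has_factor Y w >], insub_bseq n (lastn n w)).

Definition avoid_step (st : dstate D * bool * n.-bseq A) (a : A) :=
  let: (q, b, win) := st in
  (dtrans D q a, b || `[< exists2 y, suffix y (rcons win a) & Y y >],
   insub_bseq n (lastn n (rcons win a))).

Lemma avoid_step_rcons w a : avoid_step (avoid_state w) a = avoid_state (rcons w a).
Proof.
have win : val (insub_bseq n (lastn n w)) = lastn n w.
  by apply: insubdK; rewrite unfold_in size_lastn geq_minl.
rewrite /avoid_step /avoid_state win lastn_rcons foldl_rcons; congr (_, _, _).
have window y : Y y -> suffix y (rcons (lastn n w) a) = suffix y (rcons w a).
  by move/size_Y => yn; rewrite -(suffix_lastn _ yn) lastn_rcons suffix_lastn.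
apply/orP/asboolP; rewrite has_factor_rcons.
  case=> [/asboolP | /asboolP [y yw Yy]]; first by left.
  by right; exists y; rewrite -?window.
case=> [/asboolP | [y yw Yy]]; first by left.
by right; apply/asboolP; exists y; rewrite ?window.
Qed.

Lemma foldl_avoid_step w : foldl avoid_step (avoid_state [::]) w = avoid_state w.
Proof. by elim/last_ind: w => // w a IH; rewrite foldl_rcons IH avoid_step_rcons. Qed.

Definition avoid_dfa : dfa A :=
  @DFA A _ (avoid_state [::]) (fun st => dfinal D st.1.1 && ~~ st.1.2) avoid_step.

Lemma avoid_dfa_accepts w :
  dfa_accepts avoid_dfa w = dfa_accepts D w && ~~ `[< has_factor Y w >].
Proof. by rewrite /dfa_accepts /= foldl_avoid_step. Qed.

End AvoidFactors.

Lemma regular_avoid_factors (A : finType) (L Y : seq A -> Prop) n :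
  regular L -> (forall y, Y y -> size y <= n) ->
  regular (fun w => L w /\ ~ has_factor Y w).
Proof.
case=> D accD size_Y; exists (avoid_dfa Y n D) => w.
rewrite avoid_dfa_accepts //.
by split=> [[/accD -> /asboolPn] | /andP[/accD ? /asboolPn]].
Qed.

Section LongRankZero.

Variables (Sigma : finType) (g : cnf_grammar (option Sigma)) (D : dfa Sigma).

Definition same_action (y y' : seq Sigma) : Prop :=
  forall q, foldl (dtrans D) q y = foldl (dtrans D) q y'.

Definition shortenable n (y : seq Sigma) : Prop :=
  size y <= n /\ exists B t t' y', [/\ derives g B t (map Some y),
    derives g B t' (map Some y'), size y' < size y & same_action y y'].

Definition dtrans_opt (q : dstate D) (o : option Sigma) : dstate D :=
  if o is Some a then dtrans D q a else q.

Lemma foldl_dtrans_opt q y : foldl dtrans_opt q (map Some y) = foldl (dtrans D) q y.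
Proof. by elim: y q => //= a y IH q; rewrite IH. Qed.

Definition node_label (s : ptree (nonterm g) (option Sigma)) :
    nonterm g * {ffun dstate D -> dstate D} :=
  (proot s, [ffun q => foldl dtrans_opt q (pyield s)]).

Definition label_count : nat := #|{: nonterm g * {ffun dstate D -> dstate D}}|.

Lemma rank_zero_shortenable_factor s :
  pvalid g s -> rank_zero (proot s) -> 2 ^ label_count < size (pyield s) ->
  exists pre y suf, pyield s = pre ++ map Some y ++ suf /\
                    shortenable (2 ^ label_count.+1) y.
Proof.
move=> vs rz long.
have no_sharp : None \notin pyield s by apply: (rz s); split.
have [|A [l [r [st rep no_rep_l no_rep_r]]]] := minimal_repeat (t := s) (lab := node_label).
  by apply: contrapT => /size_pyield_no_repeat; rewrite leqNgt long.
set t := PNode A l r in st rep *.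
have [s' ps' same_label] := rep.
have vt := subtree_pvalid st vs; have vs' := subtree_pvalid (proper_subtreeW ps') vt.
have [pre [suf ys]] := subtree_yield st.
have [pre' [suf' yt]] := subtree_yield (proper_subtreeW ps').
have t_no_sharp : None \notin pyield t.
  by move: no_sharp; rewrite ys !mem_cat !negb_or => /and3P[].
have s'_no_sharp : None \notin pyield s'.
  by move: t_no_sharp; rewrite yt !mem_cat !negb_or => /and3P[].
have [y yt_Some] := notin_None_map_Some t_no_sharp.
have [y' ys'_Some] := notin_None_map_Some s'_no_sharp.
exists pre, y, suf; split; first by rewrite -yt_Some.
split.
  rewrite -(size_map Some) -yt_Some /= size_cat expnS mul2n -addnn.
  exact: leq_add (size_pyield_no_repeat no_rep_l) (size_pyield_no_repeat no_rep_r).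
exists (proot t), t, s', y'; split.
- by split.
- by split=> //; case: same_label.
- by rewrite -(size_map Some) -[X in _ < X](size_map Some) -yt_Some -ys'_Some proper_subtree_size.
- move=> q; move: same_label; rewrite /node_label yt_Some ys'_Some.
  by case=> _ /ffunP/(_ q); rewrite !ffunE !foldl_dtrans_opt => ->.
Qed.

Lemma sharp3_rank_zero_yield t u v w :
  pvalid g t -> pyield t = sharp3 u v w ->
  ~ has_factor (shortenable (2 ^ label_count.+1)) u ->
  ~ has_factor (shortenable (2 ^ label_count.+1)) v ->
  ~ has_factor (shortenable (2 ^ label_count.+1)) w ->
  all_nodes (fun s => rank_zero (proot s) -> size (pyield s) <= 2 ^ label_count) t.
Proof.
move=> vt yt avoid_u avoid_v avoid_w.
apply: all_nodes_subtree => s st rz; rewrite leqNgt; apply/negP => long.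
have [pre [y [suf [ys Yy]]]] := rank_zero_shortenable_factor (subtree_pvalid st vt) rz long.
have [pre' [suf' yts]] := subtree_yield st.
have : (pre' ++ pre) ++ map Some y ++ (suf ++ suf') = sharp3 u v w.
  by rewrite -yt yts ys !catA.
case/sharp3_factor => p [q [[Eu _]|[Ev _]|[Ew _]]];
  [apply: avoid_u | apply: avoid_v | apply: avoid_w]; exists y => //; apply/infixP; by exists p, q.
Qed.

End LongRankZero.

Section CombingGrammar.

Variables (G : Type) (gs : group_str G) (Sigma : finType) (phi : seq Sigma -> G).
Variables (R : seq Sigma -> Prop) (g : cnf_grammar (option Sigma)).
Hypothesis phi_cat : forall w v, phi (w ++ v) = gmul gs (phi w) (phi v).
Hypothesis gen_M : generates g (Mlang gs phi R).
Hypothesis useful : productions_useful g (Mlang gs phi R).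
Hypothesis occur : nonterminals_occur g.

Lemma phi_factor_cancel p q y y' : phi (p ++ y ++ q) = phi (p ++ y' ++ q) -> phi y = phi y'.
Proof. by rewrite !phi_cat => /(gmulI (phi p)) /(gmulIr (phi q)). Qed.

Lemma Mlang_factor_image pre suf y y' :
  Mlang gs phi R (pre ++ map Some y ++ suf) -> Mlang gs phi R (pre ++ map Some y' ++ suf) ->
  phi y = phi y'.
Proof.
move=> [u [v [w [E _ _ _ one]]]] [u' [v' [w' [E' _ _ _ one']]]].
have [p [q [[Eu fill]|[Ev fill]|[Ew fill]]]] := sharp3_factor E;
  move: E'; rewrite fill => /sharp3_inj [Eu' Ev' Ew'];
  move: (etrans one (esym one')); rewrite -Eu' -Ev' -Ew' => same;
  apply: (@phi_factor_cancel p q).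
- by move: same; rewrite Eu => /(gmulIr (phi w)) /(gmulIr (phi v)).
- by move: same; rewrite Ev => /(gmulIr (phi w)) /(gmulI (phi u)).
- by move: same; rewrite Ew => /(gmulI (gmul gs (phi u) (phi v))).
Qed.

Lemma derives_same_image B t t' y y' :
  derives g B t (map Some y) -> derives g B t' (map Some y') -> phi y = phi y'.
Proof.
move=> [vt rt yt] [vt' rt' yt'].
have [t0 [x0 [[v0 r0 _] [s st0 rs]]]] := nonterminal_occurs useful occur B.
have [pre [suf [_ fill]]] := subtree_context st0 v0.
have in_M t1 y1 : pvalid g t1 -> proot t1 = B -> pyield t1 = map Some y1 ->
    Mlang gs phi R (pre ++ map Some y1 ++ suf).
  move=> v1 r1 yt1; have [t2 [v2 r2 yt2]] := fill t1 v1 (etrans r1 (esym rs)).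
  by apply/gen_M; exists t2; split; rewrite // ?r2 // yt2 yt1.
exact: Mlang_factor_image (in_M t y vt rt yt) (in_M t' y' vt' rt' yt').
Qed.

Lemma shorten_to_avoid (D : dfa Sigma) n u :
  (forall w, R w <-> dfa_accepts D w) -> R u ->
  exists u', [/\ R u', ~ has_factor (shortenable g D n) u' & phi u' = phi u].
Proof.
move=> accD; have [k] := ubnP (size u); elim: k u => // k IH u /ltnSE size_u Ru.
have [[y /infixP [p [q Eu]] [_ [B [t [t' [y' [Dy Dy' shorter same]]]]]]] | avoid] :=
  pselect (has_factor (shortenable g D n) u); last by exists u.
have Ru' : R (p ++ y' ++ q).
  by apply/accD; move/accD: Ru; rewrite Eu /dfa_accepts !foldl_cat same.
have [|u'' [Ru'' avoid'' phi_u'']] := IH _ _ Ru'.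
  by move: size_u; rewrite Eu !size_cat; lia.
by exists u''; split; rewrite // phi_u'' Eu !phi_cat (derives_same_image Dy Dy').
Qed.

Lemma regular_combing_shortenable_free (D : dfa Sigma) n :
  (forall w, R w <-> dfa_accepts D w) -> (forall h, exists w, R w /\ phi w = h) ->
  regular_combing phi (fun w => R w /\ ~ has_factor (shortenable g D n) w).
Proof.
move=> accD onto; split; first by apply: (regular_avoid_factors (n := n)); [exists D | move=> y [? _]].
move=> h; have [u [Ru <-]] := onto h.
by have [u' [Ru' avoid_u' <-]] := shorten_to_avoid n accD Ru; exists u'.
Qed.

End CombingGrammar.

Theorem lemma5p1 (G : Type) (gs : group_str G) (Sigma : finType)
  (sinv : Sigma -> Sigma) (phi : seq Sigma -> G)
  (Hgen : choice_of_generators gs sinv phi)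
  (R : seq Sigma -> Prop) (HR : regular_combing phi R)
  (g : cnf_grammar (option Sigma))
  (Hgram : generates g (Mlang gs phi R))
  (Huse : productions_useful g (Mlang gs phi R))
  (Hocc : nonterminals_occur g) :
  exists (K' : nat) (R' : seq Sigma -> Prop),
    [/\ regular_combing phi R', (forall w, R' w -> R w) &
        forall x, Mlang gs phi R x -> concat3 R' x ->
          exists t, derives g (gstart g) t x /\
            all_nodes (fun s => rank_zero (proot s) -> size (pyield s) <= K') t].
Proof.
have [_ _ phi_cat _ _] := Hgen.
have [[D accD] onto] := HR.
exists (2 ^ label_count g D),
  (fun w => R w /\ ~ has_factor (shortenable g D (2 ^ (label_count g D).+1)) w); split.
- exact: regular_combing_shortenable_free phi_cat Hgram Huse Hocc _ _ accD onto.
- by move=> w [].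
move=> x Mx [u [v [w [Ex [_ avoid_u] [_ avoid_v] [_ avoid_w]]]]].
have [t [vt rt yt]] := (Hgram x).1 Mx.
exists t; split=> //.
by apply: sharp3_rank_zero_yield vt _ avoid_u avoid_v avoid_w; rewrite yt Ex.
Qed.
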